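(* Let $\sigma\in\mathcal E$ be a coordinated equilibrium strategy of $\langle\Gamma,M\rangle$. Then $\pi(\sigma,\sigma)\le\max\{\pi(\sigma_L,\sigma_L),\pi(\sigma_R,\sigma_R)\}$.
   Context: Game $\langle\Gamma,M\rangle$. Two players; each player's type is drawn independently from a distribution on $U=[0,1]$ with continuous CDF $F$ and density $f$ with $f(u)>0$ for all $u\in[0,1]$. Each player chooses an action in $\{L,R\}$; a player of type $u$ gets $1-u$ if both choose $L$, $u$ if both choose $R$, and $0$ otherwise. Before choosing actions, players simultaneously send publicly observed costless messages from a finite set $M$ with $|M|\ge4$. A strategy is $\sigma=(\mu,\xi)$ with $\mu:U\to\Delta(M)$ measurable ($\mu_u(m)$ = probability type $u$ sends $m$) and $\xi:M\times M\to[0,1]$: a player who sent $m$ and observes $m'$ plays $L$ iff her type $u\le\xi(m,m')$. $\Sigma$ is the set of strategies. $\bar\mu(m)=\int_0^1\mu_u(m)f(u)du$, $\mathrm{supp}(\bar\mu)=\{m:\bar\mu(m)>0\}$. Write $\xi(m,m')=L$ if $\xi(m,m')\ge\sup\{u:\mu_u(m)>0\}$ and $\xi(m,m')=R$ if $\xi(m,m')\le\inf\{u:\mu_u(m)>0\}$. Payoffs: $\pi_{u,v}(\sigma,\sigma')=\sum_{m,m'}\mu_u(m)\mu'_v(m')[(1-u)\mathbf 1\{u\le\xi(m,m')\}\mathbf 1\{v\le\xi'(m',m)\}+u\mathbf 1\{u>\xi(m,m')\}\mathbf 1\{v>\xi'(m',m)\}]$, $\pi_u(\sigma,\sigma')=\int_0^1\pi_{u,v}(\sigma,\sigma')f(v)dv$,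 $\pi(\sigma,\sigma')=\int_0^1\pi_u(\sigma,\sigma')f(u)du$. $\sigma\in\mathcal E$ (equilibrium strategy) if $\pi_u(\sigma,\sigma)\ge\pi_u(\sigma',\sigma)$ for all $u$, $\sigma'$. $\sigma$ is coordinated if for all $m,m'\in\mathrm{supp}(\bar\mu)$, either $\xi(m,m')=\xi(m',m)=L$ or $\xi(m,m')=\xi(m',m)=R$. Fix distinct $m_L,m_R\in M$. $\mu^*(u)=m_L$ (with probability one) if $u\le1/2$ and $\mu^*(u)=m_R$ if $u>1/2$. $\xi_L(m,m')=0$ if $m=m'=m_R$ and $1$ otherwise; $\xi_R(m,m')=1$ if $m=m'=m_L$ and $0$ otherwise. $\sigma_L=(\mu^*,\xi_L)$, $\sigma_R=(\mu^*,\xi_R)$. *)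

From HB Require Import structures.
From mathcomp Require Import all_boot all_order all_algebra.
From mathcomp Require Import all_classical all_reals all_analysis.
Set Implicit Arguments. Unset Strict Implicit. Unset Printing Implicit Defensive.
Import Order.TTheory GRing.Theory Num.Theory.
Local Open Scope classical_set_scope.
Local Open Scope ring_scope.

Section Game.
Variables (R : realType) (M : finType).

(* A strategy sigma = (mu, xi): mu u m = probability that type u sends m;
   a player who sent m and observes m' plays L iff u <= xi m m'. *)
Record strat := Strat { smu : R -> M -> R ; sxi : M -> M -> R }.

Definition is_strategy (s : strat) : Prop :=
  (forall m, measurable_fun `[0%R : R, 1] (fun u => smu s u m)) /\
  (forall u, u \in `[0%R : R, 1] -> (forall m, 0 <= smu s u m) /\ \sum_m smu s u m = 1) /\
  (forall m m', 0 <= sxi s m m' <= 1).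

Definition ind (b : bool) : R := if b then 1 else 0.

Definition payoff_uv (s s' : strat) (u v : R) : R :=
  \sum_m \sum_m' smu s u m * smu s' v m' *
    ((1 - u) * ind (u <= sxi s m m') * ind (v <= sxi s' m' m)
     + u * ind (sxi s m m' < u) * ind (sxi s' m' m < v)).

Definition payoff_u (f : R -> R) (s s' : strat) (u : R) : R :=
  Rintegral lebesgue_measure `[0%R : R, 1] (fun v => payoff_uv s s' u v * f v).

Definition payoff (f : R -> R) (s s' : strat) : R :=
  Rintegral lebesgue_measure `[0%R : R, 1] (fun u => payoff_u f s s' u * f u).

Definition mubar (f : R -> R) (s : strat) (m : M) : R :=
  Rintegral lebesgue_measure `[0%R : R, 1] (fun u => smu s u m * f u).

Definition in_supp (f : R -> R) (s : strat) (m : M) : Prop := 0 < mubar f s m.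

Definition is_equilibrium (f : R -> R) (s : strat) : Prop :=
  is_strategy s /\
  forall u, u \in `[0%R : R, 1] -> forall s', is_strategy s' -> payoff_u f s' s u <= payoff_u f s s u.

Definition senders (s : strat) (m : M) : set R :=
  [set u | u \in `[0%R : R, 1] /\ 0 < smu s u m].

Definition xiL (s : strat) (m m' : M) : Prop := sup (senders s m) <= sxi s m m'.
Definition xiR (s : strat) (m m' : M) : Prop := sxi s m m' <= inf (senders s m).

Definition coordinated (f : R -> R) (s : strat) : Prop :=
  forall m m', in_supp f s m -> in_supp f s m' ->
    (xiL s m m' /\ xiL s m' m) \/ (xiR s m m' /\ xiR s m' m).

Definition is_type_density (f : R -> R) : Prop :=
  measurable_fun `[0%R : R, 1] f /\
  (forall u, u \in `[0%R : R, 1] -> 0 < f u) /\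
  lebesgue_measure.-integrable `[0%R : R, 1] (fun u => (f u)%:E) /\
  Rintegral lebesgue_measure `[0%R : R, 1] f = 1.

Definition mu_star (mL mR : M) (u : R) (m : M) : R :=
  if u <= 2^-1 then ind (m == mL) else ind (m == mR).

Definition xi_L (mR : M) (m m' : M) : R := if (m == mR) && (m' == mR) then 0 else 1.
Definition xi_R (mL : M) (m m' : M) : R := if (m == mL) && (m' == mL) then 1 else 0.

Definition sigma_L (mL mR : M) : strat := Strat (mu_star mL mR) (xi_L mR).
Definition sigma_R (mL mR : M) : strat := Strat (mu_star mL mR) (xi_R mL).

End Game.

From HB Require Import structures.
From mathcomp Require Import all_boot all_order all_algebra.
From mathcomp Require Import all_classical all_reals all_analysis.
From mathcomp Require Import lra ring.
Set Implicit Arguments. Unset Strict Implicit. Unset Printing Implicit Defensive.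
Import Order.TTheory GRing.Theory Num.Theory.
Local Open Scope classical_set_scope.
Local Open Scope ring_scope.

(* Let s be a coordinated equilibrium and, for a message m sent with positive
   probability, let alpha m be the probability that the opponent's message
   coordinates with m on L.  A sender of m of type u then earns
   msg_value m u = alpha m (1 - u) + (1 - alpha m) u, and every type can earn
   this value by the deviation "always send m, then play the coordinated
   action".  So the equilibrium payoff equals the expected upper envelope of
   the message values, attained by an alpha-maximizing message mA (value A)
   on [0, 1/2] and an alpha-minimizing one mB (value B) on (1/2, 1]; hence
   low types send only alpha-maximizing messages and high types only
   alpha-minimizing ones.  Counting the L-coordinations of the low types gives
   the budget A p - p^2 <= B (1 - p), p the mass below 1/2, and an elementary
   inequality bounds the envelope payoff by the closed-form benchmark payoffs. *)

Section TypeExpectation.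
Variables (R : realType) (f : R -> R).
Hypothesis hf : is_type_density f.
Local Notation D := ([set` `[0%R : R, 1%R]] : set R).
Local Notation mu := (@lebesgue_measure R).

Lemma measurable_types : @measurable _ (measurableTypeR R) D.
Proof. exact: measurable_itv. Qed.

Lemma in_types x : D x <-> 0 <= x <= 1.
Proof. by rewrite /= in_itv. Qed.

Definition bounded_mfun (g : R -> R) :=
  measurable_fun D g /\ exists K : R, forall x, D x -> `|g x| <= K.

Definition expect (g : R -> R) := \int[mu]_(x in D) (g x * f x).

Lemma bounded_mfun_integrable g : bounded_mfun g ->
  mu.-integrable D (EFin \o (fun x => g x * f x)).
Proof.
case: hf => mf [fpos [fint _]] [mg [K hK]].
have bg : [bounded g x | x in D].
  exists K; split; first exact: num_real.
  move=> y Ky x Dx; apply: le_trans (hK x Dx) _; exact: ltW.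
have := integrableMr measurable_types mg bg fint.
by congr (_.-integrable _ _); apply/funext => x /=; rewrite EFinM.
Qed.

Lemma eq_expect g1 g2 : (forall x, D x -> g1 x = g2 x) -> expect g1 = expect g2.
Proof. by move=> h; apply: eq_Rintegral => x /set_mem xD; rewrite h. Qed.

Lemma expectD g1 g2 : bounded_mfun g1 -> bounded_mfun g2 ->
  expect (fun x => g1 x + g2 x) = expect g1 + expect g2.
Proof.
move=> h1 h2; rewrite /expect -(RintegralD measurable_types
  (bounded_mfun_integrable h1) (bounded_mfun_integrable h2)).
by apply: eq_Rintegral => x _; rewrite mulrDl.
Qed.

Lemma expectZ c g : bounded_mfun g -> expect (fun x => c * g x) = c * expect g.
Proof.
move=> h; rewrite /expect -(RintegralZl _ measurable_types (bounded_mfun_integrable h)).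
by apply: eq_Rintegral => x _; rewrite mulrA.
Qed.

Lemma expectB g1 g2 : bounded_mfun g1 -> bounded_mfun g2 ->
  expect (fun x => g1 x - g2 x) = expect g1 - expect g2.
Proof.
move=> h1 h2; have h2N : bounded_mfun (fun x => -1 * g2 x).
  case: h2 => m2 [K hK]; split; first exact: measurable_realfun.measurable_funM.
  by exists K => x Dx; rewrite mulN1r normrN hK.
rewrite (@eq_expect _ (fun x => g1 x + -1 * g2 x)); last by move=> x _; ring.
by rewrite expectD // expectZ // mulN1r.
Qed.

Lemma ler_expect g1 g2 : bounded_mfun g1 -> bounded_mfun g2 ->
  (forall x, D x -> g1 x <= g2 x) -> expect g1 <= expect g2.
Proof.
case: hf => _ [fpos _] h1 h2 h.
apply: (le_Rintegral measurable_types (bounded_mfun_integrable h1)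
  (bounded_mfun_integrable h2)) => x Dx.
by rewrite ler_pM2r ?h// fpos.
Qed.

Lemma expect_ge0 g : (forall x, D x -> 0 <= g x) -> 0 <= expect g.
Proof.
case: hf => _ [fpos _] h; apply: Rintegral_ge0 => x Dx.
by rewrite mulr_ge0 ?h// ltW// fpos.
Qed.

Lemma expect1 : expect (fun=> 1) = 1.
Proof.
case: hf => _ [_ [_ h]]; rewrite /expect -[RHS]h.
by apply: eq_Rintegral => x _; rewrite mul1r.
Qed.

Lemma expect0 : expect (fun=> 0) = 0.
Proof.
rewrite /expect; under eq_Rintegral do rewrite mul0r.
by rewrite Rintegral_cst ?mul0r //; exact: measurable_types.
Qed.

(* A nonnegative integrand with zero expectation vanishes almost everywhere,
   hence so does any integrand vanishing wherever it does. *)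
Lemma expect_null h g : bounded_mfun h -> bounded_mfun g ->
  (forall x, D x -> 0 <= h x) -> expect h = 0 ->
  (forall x, D x -> h x = 0 -> g x = 0) -> expect g = 0.
Proof.
move=> gh gg h0 Ih hg; have fpos := proj1 (proj2 hf).
have Ifin := integrable_fin_num measurable_types (bounded_mfun_integrable gh).
have I0 : (\int[mu]_(x in D) (h x * f x)%:E = 0)%E.
  by rewrite -(fineK Ifin); move: Ih; rewrite /expect /Rintegral => ->.
have Iabs : (\int[mu]_(x in D) `|(h x * f x)%:E| = 0)%E.
  rewrite -I0; apply: eq_integral => x /set_mem Dx.
  by rewrite gee0_abs // lee_fin mulr_ge0 ?h0 // ltW // fpos.
have h_ae0 : ae_eq mu D (fun x => (h x * f x)%:E) (cst 0%E).
  apply/(ae_eq_integral_abs mu measurable_types); last exact: Iabs.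
  apply/measurable_realfun.measurable_EFinP.
  by apply: measurable_realfun.measurable_funM; [exact: gh.1|exact: hf.1].
have g_ae0 : ae_eq mu D (fun x => (g x * f x)%:E) (cst 0%E).
  apply: filterS h_ae0 => x hx Dx.
  have /eqP : h x * f x = 0 by have := hx Dx; rewrite /cst => -[].
  rewrite mulf_eq0 => /orP[/eqP hx0|/eqP fx0]; first by rewrite /cst hg // mul0r.
  by have := fpos x Dx; rewrite fx0 ltxx.
rewrite /expect /Rintegral (ae_eq_integral (cst 0%E) _ measurable_types _ _ g_ae0).
- by rewrite integral0.
- apply/measurable_realfun.measurable_EFinP.
  by apply: measurable_realfun.measurable_funM; [exact: gg.1|exact: hf.1].
- exact: measurable_cst.
Qed.

Lemma eq_expect_off_point x0 g1 g2 : bounded_mfun g1 -> bounded_mfun g2 ->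
  (forall x, D x -> x <> x0 -> g1 x = g2 x) -> expect g1 = expect g2.
Proof.
move=> gg1 gg2 h.
have g12 : ae_eq mu D (fun x => (g1 x * f x)%:E) (fun x => (g2 x * f x)%:E).
  exists [set x0]; split; [exact: measurable_set1|exact: lebesgue_measure_set1|].
  move=> t /= /not_implyP [Dt ne]; apply: contrapT => tx0.
  by apply: ne; rewrite h.
rewrite /expect /Rintegral (ae_eq_integral _ _ measurable_types _ _ g12) //.
- apply/measurable_realfun.measurable_EFinP.
  by apply: measurable_realfun.measurable_funM; [exact: gg1.1|exact: hf.1].
- apply/measurable_realfun.measurable_EFinP.
  by apply: measurable_realfun.measurable_funM; [exact: gg2.1|exact: hf.1].
Qed.

Lemma bounded_mfun_cst c : bounded_mfun (fun=> c).
Proof. by split; [exact: measurable_cst|exists `|c|]. Qed.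

Lemma bounded_mfun_id : bounded_mfun id.
Proof.
split; first exact: measurable_id.
by exists 1 => x /in_types /andP[h0 h1]; rewrite ger0_norm.
Qed.

Lemma bounded_mfunD g1 g2 : bounded_mfun g1 -> bounded_mfun g2 ->
  bounded_mfun (fun x => g1 x + g2 x).
Proof.
move=> [m1 [K1 h1]] [m2 [K2 h2]].
split; first exact: measurable_realfun.measurable_funD.
exists (K1 + K2) => x Dx; apply: le_trans (ler_normD _ _) _.
exact: lerD (h1 x Dx) (h2 x Dx).
Qed.

Lemma bounded_mfunM g1 g2 : bounded_mfun g1 -> bounded_mfun g2 ->
  bounded_mfun (fun x => g1 x * g2 x).
Proof.
move=> [m1 [K1 h1]] [m2 [K2 h2]].
split; first exact: measurable_realfun.measurable_funM.
by exists (K1 * K2) => x Dx; rewrite normrM ler_pM ?normr_ge0 ?h1 ?h2.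
Qed.

Lemma bounded_mfunB g1 g2 : bounded_mfun g1 -> bounded_mfun g2 ->
  bounded_mfun (fun x => g1 x - g2 x).
Proof.
move=> h1 h2; have -> : (fun x => g1 x - g2 x) = (fun x => g1 x + (-1) * g2 x).
  by apply/funext => x; rewrite mulN1r.
by apply: bounded_mfunD => //; apply: bounded_mfunM => //; exact: bounded_mfun_cst.
Qed.

Lemma bounded_mfun_sum (I : Type) (r : seq I) (g : I -> R -> R) :
  (forall i, bounded_mfun (g i)) -> bounded_mfun (fun x => \sum_(i <- r) g i x).
Proof.
move=> hg; elim: r => [|i r IH].
  by under [fun x => _]funext do rewrite big_nil; exact: bounded_mfun_cst.
by under [fun x => _]funext do rewrite big_cons; exact: bounded_mfunD.
Qed.

Lemma expect_sum (I : Type) (r : seq I) (g : I -> R -> R) :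
  (forall i, bounded_mfun (g i)) ->
  expect (fun x => \sum_(i <- r) g i x) = \sum_(i <- r) expect (g i).
Proof.
move=> hg; elim: r => [|i r IH].
  by rewrite big_nil (@eq_expect _ (fun=> 0)) ?expect0 // => x _; rewrite big_nil.
rewrite big_cons -IH -expectD //; last exact: bounded_mfun_sum.
by apply: eq_expect => x _; rewrite big_cons.
Qed.

Lemma bounded_mfun_ind (b : R -> bool) : measurable_fun D b ->
  bounded_mfun (fun x => ind R (b x)).
Proof.
move=> mb; split; last by exists 1 => x _; rewrite /ind; case: (b x); rewrite ?normr1 ?normr0.
by rewrite /ind; apply: (measurable_fun_if (measurable_itv _) mb); exact: measurable_cst.
Qed.

Lemma bounded_mfun_le t : bounded_mfun (fun x => ind R (x <= t)).
Proof.
apply: bounded_mfun_ind; apply: measurable_realfun.measurable_fun_ler;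
  [exact: measurable_id|exact: measurable_cst].
Qed.

Lemma bounded_mfun_gt t : bounded_mfun (fun x => ind R (t < x)).
Proof.
apply: bounded_mfun_ind; apply: measurable_realfun.measurable_fun_ltr;
  [exact: measurable_cst|exact: measurable_id].
Qed.

Lemma bounded_mfun_lt t : bounded_mfun (fun x => ind R (x < t)).
Proof.
apply: bounded_mfun_ind; apply: measurable_realfun.measurable_fun_ltr;
  [exact: measurable_id|exact: measurable_cst].
Qed.

End TypeExpectation.

Section Strategies.
Variables (R : realType) (M : finType).
Local Notation D := ([set` `[0%R : R, 1%R]] : set R).

Lemma strategy_mu_sum1 (s : strat R M) u : is_strategy s -> D u ->
  \sum_m smu s u m = 1.
Proof. by case=> _ [hs _] Du; case: (hs u Du). Qed.

Lemma strategy_mu_bound (s : strat R M) u m : is_strategy s -> D u ->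
  0 <= smu s u m <= 1.
Proof.
case=> _ [hs _] Du; have [h0 h1] := hs u Du.
rewrite h0 /= -h1 (bigD1 m) //= lerDl sumr_ge0 // => i _; exact: h0.
Qed.

Lemma bounded_mfun_mu (s : strat R M) m : is_strategy s ->
  bounded_mfun (fun u => smu s u m).
Proof.
move=> hs; split; first exact: hs.1 m.
exists 1 => u Du; have /andP[h0 h1] := strategy_mu_bound m hs Du.
by rewrite ger0_norm.
Qed.

Lemma ind01 (b : bool) : 0 <= ind R b <= 1.
Proof. by rewrite /ind; case: b; rewrite ?lexx ?ler01. Qed.

Lemma sum_ind_eq (m0 : M) : \sum_m ind R (m == m0) = 1.
Proof.
rewrite (bigD1 m0) //= big1 ?addr0 ?/ind ?eqxx // => m /negbTE hm.
by rewrite /ind hm.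
Qed.

End Strategies.

Ltac bounded_mfun_auto := repeat first
  [ apply: bounded_mfunB | apply: bounded_mfunD | apply: bounded_mfunM
  | apply: bounded_mfun_sum => ? | apply: bounded_mfun_le | apply: bounded_mfun_gt
  | apply: bounded_mfun_id | apply: bounded_mfun_cst
  | (apply: bounded_mfun_mu; assumption) ].

Section PayoffDecomposition.
Variables (R : realType) (M : finType) (f : R -> R).
Hypothesis hf : is_type_density f.
Local Notation D := ([set` `[0%R : R, 1%R]] : set R).
Local Notation expect := (expect f).

Definition massL (s : strat R M) m m' (w : R -> R) :=
  expect (fun u => smu s u m * w u * ind R (u <= sxi s m m')).
Definition massR (s : strat R M) m m' (w : R -> R) :=
  expect (fun u => smu s u m * w u * ind R (sxi s m m' < u)).

(* Against s2, a type u using s1 after (m, m') coordinates with the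
   opponents who sent m' and play the same action. *)
Lemma payoff_u_decomp (s1 s2 : strat R M) u : is_strategy s2 ->
  payoff_u f s1 s2 u = \sum_m \sum_m'
    (smu s1 u m * (1 - u) * ind R (u <= sxi s1 m m') * massL s2 m' m (fun=> 1)
     + smu s1 u m * u * ind R (sxi s1 m m' < u) * massR s2 m' m (fun=> 1)).
Proof.
move=> hs2; rewrite [LHS](expect_sum hf); last by move=> m; bounded_mfun_auto.
apply: eq_bigr => m _; rewrite (expect_sum hf); last by move=> m'; bounded_mfun_auto.
apply: eq_bigr => m' _.
rewrite (@eq_expect R f _ (fun v =>
   (smu s1 u m * (1 - u) * ind R (u <= sxi s1 m m')) *
      (smu s2 v m' * 1 * ind R (v <= sxi s2 m' m)) +
   (smu s1 u m * u * ind R (sxi s1 m m' < u)) *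
      (smu s2 v m' * 1 * ind R (sxi s2 m' m < v)))); last by move=> v _; ring.
by rewrite (expectD hf) ?(expectZ hf) //; bounded_mfun_auto.
Qed.

Lemma payoff_decomp (s : strat R M) : is_strategy s ->
  payoff f s s = \sum_m \sum_m'
    (massL s m m' (fun u => 1 - u) * massL s m' m (fun=> 1)
     + massR s m m' id * massR s m' m (fun=> 1)).
Proof.
move=> hs; have -> : payoff f s s = expect (payoff_u f s s) by [].
rewrite (@eq_expect R f _ _ (fun u _ => payoff_u_decomp s u hs)).
rewrite (expect_sum hf); last by move=> m; bounded_mfun_auto.
apply: eq_bigr => m _; rewrite (expect_sum hf); last by move=> m'; bounded_mfun_auto.
apply: eq_bigr => m' _.
rewrite (@eq_expect R f _ (fun u =>
   massL s m' m (fun=> 1) * (smu s u m * (1 - u) * ind R (u <= sxi s m m')) +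
   massR s m' m (fun=> 1) * (smu s u m * id u * ind R (sxi s m m' < u))));
  last by move=> v _ /=; ring.
rewrite (expectD hf) ?(expectZ hf) /massL /massR; [ring|bounded_mfun_auto..].
Qed.

Lemma mubar_ge0 (s : strat R M) m : is_strategy s -> 0 <= mubar f s m.
Proof.
move=> hs; apply: (expect_ge0 hf) => u Du.
by have /andP[] := strategy_mu_bound m hs Du.
Qed.

Lemma mass_unsent (s : strat R M) m m' w : is_strategy s -> bounded_mfun w ->
  (forall u, D u -> 0 <= w u <= 1) -> mubar f s m = 0 ->
  massL s m m' w = 0 /\ massR s m m' w = 0.
Proof.
move=> hs gw w01 q0.
suff null b : bounded_mfun (fun u => ind R (b u)) ->
    expect (fun u => smu s u m * w u * ind R (b u)) = 0.
  by split; apply: null; [exact: bounded_mfun_le|exact: bounded_mfun_gt].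
move=> gb; apply/le_anti/andP; split; last first.
  apply: (expect_ge0 hf) => u Du; have /andP[a0 _] := strategy_mu_bound m hs Du.
  by have /andP[b0 _] := w01 u Du; rewrite !mulr_ge0 // (andP (ind01 _ _)).1.
rewrite -q0; apply: (ler_expect hf); [|bounded_mfun_auto|].
  exact: bounded_mfunM (bounded_mfunM (bounded_mfun_mu m hs) gw) gb.
move=> u Du; have /andP[a0 _] := strategy_mu_bound m hs Du.
have /andP[b0 b1] := w01 u Du; have /andP[c0 c1] := ind01 R (b u).
by rewrite -mulrA ler_piMr // mulr_ile1.
Qed.

Lemma sender_le_sup (s : strat R M) m u : D u -> 0 < smu s u m ->
  u <= sup (senders s m).
Proof.
move=> Du pos; apply: ub_le_sup; last by split.
by exists 1 => y [/in_types /andP[_ ->] _].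
Qed.

Lemma sender_ge_inf (s : strat R M) m u : D u -> 0 < smu s u m ->
  inf (senders s m) <= u.
Proof.
move=> Du pos; apply: ge_inf; last by split.
by exists 0 => y [/in_types /andP[-> _] _].
Qed.

Lemma mass_xiL (s : strat R M) m m' w : is_strategy s -> xiL s m m' ->
  massL s m m' w = expect (fun u => smu s u m * w u) /\ massR s m m' w = 0.
Proof.
move=> hs hL; rewrite -(expect0 f); split; apply: eq_expect => u Du;
  have /andP[a0 _] := strategy_mu_bound m hs Du;
  (move: a0; rewrite le_eqVlt => /orP[/eqP <-|pos]; first by rewrite !mul0r);
  have uL := le_trans (sender_le_sup Du pos) hL.
  by rewrite /ind uL mulr1.
by rewrite /ind ltNge uL mulr0.
Qed.

(* If xi(m,m') = R, every sender of m except possibly the type xi(m,m')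
   itself plays R after observing m'. *)
Lemma mass_xiR (s : strat R M) m m' w : is_strategy s -> bounded_mfun w ->
  xiR s m m' ->
  massL s m m' w = 0 /\ massR s m m' w = expect (fun u => smu s u m * w u).
Proof.
move=> hs gw hR; rewrite -(expect0 f).
split; apply: (eq_expect_off_point hf (x0 := sxi s m m'));
  try (by bounded_mfun_auto; exact: gw);
  move=> u Du ne; have /andP[a0 _] := strategy_mu_bound m hs Du;
  (move: a0; rewrite le_eqVlt => /orP[/eqP <-|pos]; first by rewrite !mul0r);
  have uR : sxi s m m' < u by rewrite lt_neqAle (le_trans hR (sender_ge_inf Du pos))
    andbT; apply/eqP => e; apply: ne.
  by rewrite /ind leNgt uR mulr0.
by rewrite /ind uR mulr1.
Qed.

Lemma xiL_of_one (s : strat R M) m m' : sxi s m m' = 1 -> xiL s m m'.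
Proof.
rewrite /xiL => ->; have [->|ne] := eqVneq (senders s m) set0; first by rewrite sup0.
by apply: ge_sup; [exact/set0P|move=> u [/in_types /andP[]]].
Qed.

Lemma xiR_of_zero (s : strat R M) m m' : sxi s m m' = 0 -> xiR s m m'.
Proof.
rewrite /xiR => ->; have [->|ne] := eqVneq (senders s m) set0; first by rewrite inf0.
by apply: lb_le_inf; [exact/set0P|move=> u [/in_types /andP[]]].
Qed.

End PayoffDecomposition.

Section HalfSplit.
Variables (R : realType) (f : R -> R).
Hypothesis hf : is_type_density f.
Local Notation D := ([set` `[0%R : R, 1%R]] : set R).
Local Notation expect := (expect f).
Local Notation half := (2^-1 : R).

Definition p_low := expect (fun u => ind R (u <= half)).
Definition p_high := expect (fun u => ind R (half < u)).
Definition low_L := expect (fun u => ind R (u <= half) * (1 - u)).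
Definition low_R := expect (fun u => ind R (u <= half) * u).
Definition high_L := expect (fun u => ind R (half < u) * (1 - u)).
Definition high_R := expect (fun u => ind R (half < u) * u).

Lemma ind_split (x : R) : ind R (x <= half) + ind R (half < x) = 1.
Proof. by rewrite /ind ltNge; case: (x <= half); rewrite ?addr0 ?add0r. Qed.

Lemma p_low_high : p_low + p_high = 1.
Proof.
rewrite /p_low /p_high -(expectD hf); [|bounded_mfun_auto..].
by rewrite -[RHS](expect1 hf); apply: eq_expect => u _; exact: ind_split.
Qed.

Lemma p_low_ge0 : 0 <= p_low.
Proof. by apply: (expect_ge0 hf) => u _; rewrite /ind; case: ifP. Qed.

Lemma p_high_ge0 : 0 <= p_high.
Proof. by apply: (expect_ge0 hf) => u _; rewrite /ind; case: ifP. Qed.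

Lemma low_R_le_L : low_R <= low_L.
Proof.
apply: (ler_expect hf); [bounded_mfun_auto..|] => u /in_types /andP[u0 u1].
by rewrite /ind; case: ifP => h; rewrite ?mul0r // !mul1r; move: h; lra.
Qed.

Lemma high_L_le_R : high_L <= high_R.
Proof.
apply: (ler_expect hf); [bounded_mfun_auto..|] => u /in_types /andP[u0 u1].
by rewrite /ind; case: ifP => h; rewrite ?mul0r // !mul1r; move: h; lra.
Qed.

Lemma high_gain_le : high_R - high_L <= p_high.
Proof.
have L0 : 0 <= high_L.
  apply: (expect_ge0 hf) => u /in_types /andP[u0 u1].
  by rewrite /ind; case: ifP => _; rewrite ?mul0r // mul1r; lra.
suff : high_R <= p_high by lra.
apply: (ler_expect hf); [bounded_mfun_auto..|] => u /in_types /andP[u0 u1].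
by rewrite /ind; case: ifP => _; rewrite ?mul0r // mul1r.
Qed.

End HalfSplit.

(* The elementary inequality behind the final bound: with x the gain of the
   low types from L, y that of the high types from R, p the mass of the low
   types, A and B the L-probabilities of the low and high senders, the
   constraint A p - p^2 <= B (1 - p) caps the envelope payoff
   A x - B y by the better benchmark. *)
Lemma envelope_ineq (R : realFieldType) (x y p pr A B : R) :
  0 <= x -> 0 <= y -> y <= pr -> 0 <= p -> 0 <= pr -> p + pr = 1 ->
  0 <= B -> A <= 1 -> A * p - p * p <= B * pr ->
  A * x - B * y <= Num.max (x - p * y) (p * x).
Proof.
move=> x0 y0 ypr p0 pr0 ppr B0 A1 budget.
have [Ap|pA] := leP A p.
  have h1 : A * x <= p * x by rewrite ler_wpM2r.
  have h2 : 0 <= B * y by rewrite mulr_ge0.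
  by rewrite le_max; apply/orP; right; lra.
set Mx := Num.max _ _.
have m1 : x - p * y <= Mx by rewrite le_max lexx.
have m2 : p * x <= Mx by rewrite le_max lexx orbT.
have pr_gt0 : 0 < pr by lra.
have k1 : (A - p) * (x - p * y) <= (A - p) * Mx by rewrite ler_wpM2l // subr_ge0 ltW.
have k2 : (1 - A) * (p * x) <= (1 - A) * Mx by rewrite ler_wpM2l // subr_ge0.
have k3 : (A * p - p * p) * y <= (B * pr) * y by rewrite ler_wpM2r.
suff : pr * (A * x - B * y) <= pr * Mx by rewrite ler_pM2l.
have epr : pr = 1 - p by lra.
have e : pr * (A * x - B * y) = (A - p) * (x - p * y) + (1 - A) * (p * x)
   - ((B * pr) * y - (A * p - p * p) * y) by rewrite epr; ring.
have -> : pr * Mx = (A - p) * Mx + (1 - A) * Mx by rewrite epr; ring.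
by rewrite e; lra.
Qed.

Section CoordinatedEquilibrium.
Variables (R : realType) (M : finType) (f : R -> R).
Hypothesis hf : is_type_density f.
Local Notation D := ([set` `[0%R : R, 1%R]] : set R).
Local Notation expect := (expect f).
Local Notation half := (2^-1 : R).
Variable s : strat R M.
Hypothesis hs : is_strategy s.
Hypothesis hC : coordinated f s.
Local Notation q := (mubar f s).

Definition sent m : bool := 0 < q m.

Definition Lpair m m' : bool := `[< xiL s m m' /\ xiL s m' m >].

Definition alpha m := \sum_m' (if sent m' && Lpair m m' then q m' else 0).

Definition msg_value m (u : R) := alpha m * (1 - u) + (1 - alpha m) * u.

Lemma unsent_mubar m : ~~ sent m -> q m = 0.
Proof. by rewrite /sent -leNgt => h; apply/le_anti; rewrite h mubar_ge0. Qed.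

Lemma sum_sent_mubar : \sum_m (if sent m then q m else 0) = 1.
Proof.
have -> : \sum_m (if sent m then q m else 0) = \sum_m q m.
  by apply: eq_bigr => m _; case: ifP => // /negbT /unsent_mubar ->.
rewrite -(expect_sum hf); last by move=> m; bounded_mfun_auto.
by rewrite -(expect1 hf); apply: eq_expect => u Du; rewrite strategy_mu_sum1.
Qed.

Lemma alpha_ge0 m : 0 <= alpha m.
Proof. by apply: sumr_ge0 => m' _; case: ifP => // _; exact: mubar_ge0. Qed.

Lemma alpha_le1 m : alpha m <= 1.
Proof.
rewrite -sum_sent_mubar; apply: ler_sum => m' _.
by case: (sent m'); case: (Lpair m m'); rewrite //= mubar_ge0.
Qed.

Lemma Lpair_sym m m' : Lpair m m' = Lpair m' m.
Proof. by apply/idP/idP => /asboolP [h1 h2]; apply/asboolP; split. Qed.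

Lemma massL_one m m' : xiL s m m' -> massL f s m m' (fun=> 1) = q m.
Proof.
move=> h; rewrite (mass_xiL f _ hs h).1.
by apply: eq_expect => u _; rewrite mulr1.
Qed.

Lemma massR_one m m' : xiR s m m' -> massR f s m m' (fun=> 1) = q m.
Proof.
move=> h; rewrite (mass_xiR hf hs (bounded_mfun_cst 1) h).2.
by apply: eq_expect => u _; rewrite mulr1.
Qed.

Lemma coordinated_term m m' :
  massL f s m m' (fun u => 1 - u) * massL f s m' m (fun=> 1)
     + massR f s m m' id * massR f s m' m (fun=> 1)
  = if sent m && sent m' then
      (if Lpair m m' then expect (fun u => smu s u m * (1 - u)) * q m'
       else expect (fun u => smu s u m * u) * q m')
    else 0.
Proof.
have w1u u : D u -> 0 <= 1 - u <= 1 by move/in_types => /andP[h0 h1]; apply/andP; lra.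
have w1 u : D u -> 0 <= (fun=> 1 : R) u <= 1 by move=> _; rewrite ler01 lexx.
have wid u : D u -> 0 <= id u <= 1 by move/in_types.
have [Sm|/unsent_mubar q0] := boolP (sent m); last first.
  rewrite (mass_unsent hf m' hs _ w1u q0).1; last by bounded_mfun_auto.
  by rewrite (mass_unsent hf m' hs (@bounded_mfun_id R) wid q0).2 !mul0r addr0.
have [Sm'|/unsent_mubar q0] := boolP (sent m'); last first.
  rewrite (mass_unsent hf m hs (bounded_mfun_cst 1) w1 q0).1.
  by rewrite (mass_unsent hf m hs (bounded_mfun_cst 1) w1 q0).2 !mulr0 addr0.
have [/asboolP [h1 h2]|nL] := boolP (Lpair m m').
  by rewrite (mass_xiL f _ hs h1).1 (mass_xiL f _ hs h1).2 massL_one // mul0r addr0.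
case: (hC Sm Sm') => [[h1 h2]|[h1 h2]].
  by move: nL; have -> : Lpair m m' by apply/asboolP.
rewrite (mass_xiR hf hs _ h1).1 ?(mass_xiR hf hs (@bounded_mfun_id R) h1).2 ?massR_one //.
  by rewrite mul0r add0r.
by bounded_mfun_auto.
Qed.

Lemma payoff_msg_values : payoff f s s =
  \sum_m (if sent m then expect (fun u => smu s u m * msg_value m u) else 0).
Proof.
rewrite (payoff_decomp hf hs); apply: eq_bigr => m _.
under eq_bigr do rewrite coordinated_term.
have [Sm|nSm] := boolP (sent m); last by rewrite big1 // => m' _; rewrite (negbTE nSm).
rewrite [RHS](@eq_expect R f _ (fun u => alpha m * (smu s u m * (1 - u))
   + (1 - alpha m) * (smu s u m * u))); last by move=> u _ /=; rewrite /msg_value; ring.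
rewrite (expectD hf); [|bounded_mfun_auto..]; rewrite !(expectZ hf); [|bounded_mfun_auto..].
rewrite (eq_bigr (fun m' => expect (fun u => smu s u m * (1 - u))
     * (if sent m' && Lpair m m' then q m' else 0)
   + expect (fun u => smu s u m * u)
     * ((if sent m' then q m' else 0) - (if sent m' && Lpair m m' then q m' else 0))));
  last by move=> m' _; case: (sent m'); case: (Lpair m m') => /=; ring.
by rewrite big_split /= -!mulr_sumr sumrB sum_sent_mubar /alpha; ring.
Qed.

Definition deviation (m0 : M) : strat R M :=
  Strat (fun (_ : R) m => ind R (m == m0)) (fun m m' => if Lpair m m' then 1 else 0).

Lemma deviation_strategy m0 : is_strategy (deviation m0).
Proof.
split; first by move=> m; exact: measurable_cst.
split; first by move=> u _; split; [move=> m; exact: (andP (ind01 _ _)).1|exact: sum_ind_eq].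
by move=> m m' /=; case: (Lpair m m'); rewrite ?lexx ?ler01.
Qed.

Lemma deviation_payoff m0 u : sent m0 -> D u ->
  payoff_u f (deviation m0) s u = msg_value m0 u.
Proof.
move=> Sm0 Du; have /in_types /andP[u0 u1] := Du.
have w1 v : D v -> 0 <= (fun=> 1 : R) v <= 1 by move=> _; rewrite ler01 lexx.
rewrite (payoff_u_decomp hf (deviation m0) u hs) (bigD1 m0) //= [X in _ + X]big1;
  last by move=> m /negbTE hm; apply: big1 => m' _; rewrite /ind hm; ring.
rewrite addr0 (eq_bigr (fun m' => (if sent m' && Lpair m0 m' then q m' else 0) * (1 - u)
   + ((if sent m' then q m' else 0) - (if sent m' && Lpair m0 m' then q m' else 0)) * u)).
  by rewrite big_split /= -!mulr_suml sumrB sum_sent_mubar /msg_value /alpha; ring.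
move=> m' _; rewrite /ind eqxx.
have [Sm'|/unsent_mubar q0] := boolP (sent m'); last first.
  rewrite (mass_unsent hf m0 hs (bounded_mfun_cst 1) w1 q0).1.
  by rewrite (mass_unsent hf m0 hs (bounded_mfun_cst 1) w1 q0).2 /=; ring.
have [/asboolP [h1 h2]|nL] := boolP (Lpair m0 m').
  by rewrite massL_one //= u1 (ltNge 1 u) u1 /=; ring.
case: (hC Sm0 Sm') => [[h1 h2]|[h1 h2]].
  by move: nL; have -> : Lpair m0 m' by apply/asboolP.
rewrite (mass_xiR hf hs (bounded_mfun_cst 1) h2).1 massR_one //=.
by move: u0; rewrite le_eqVlt => /orP[/eqP <-|->]; rewrite ?ltxx; ring.
Qed.

Definition mass_low m := expect (fun u => smu s u m * ind R (u <= half)).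
Definition mass_high m := expect (fun u => smu s u m * ind R (half < u)).

Lemma mass_low_ge0 m : 0 <= mass_low m.
Proof.
apply: (expect_ge0 hf) => u Du; rewrite mulr_ge0 ?(andP (ind01 _ _)).1 //.
by have /andP[] := strategy_mu_bound m hs Du.
Qed.

Lemma mass_high_ge0 m : 0 <= mass_high m.
Proof.
apply: (expect_ge0 hf) => u Du; rewrite mulr_ge0 ?(andP (ind01 _ _)).1 //.
by have /andP[] := strategy_mu_bound m hs Du.
Qed.

Lemma mass_low_high m : mass_low m + mass_high m = q m.
Proof.
rewrite /mass_low /mass_high -(expectD hf); [|bounded_mfun_auto..].
by apply: eq_expect => u _; rewrite -mulrDr ind_split mulr1.
Qed.

Lemma unsent_masses m : ~~ sent m -> mass_low m = 0 /\ mass_high m = 0.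
Proof.
move=> /unsent_mubar q0; have := mass_low_high m.
by have := mass_low_ge0 m; have := mass_high_ge0 m; rewrite q0; split; lra.
Qed.

Lemma sum_mass_low : \sum_m mass_low m = p_low f.
Proof.
rewrite -(expect_sum hf); last by move=> m; bounded_mfun_auto.
by apply: eq_expect => u Du; rewrite -mulr_suml strategy_mu_sum1 ?mul1r.
Qed.

Lemma sum_mass_high : \sum_m mass_high m = p_high f.
Proof.
rewrite -(expect_sum hf); last by move=> m; bounded_mfun_auto.
by apply: eq_expect => u Du; rewrite -mulr_suml strategy_mu_sum1 ?mul1r.
Qed.

Definition coord_weight m m' : R := if sent m && sent m' && Lpair m m' then 1 else 0.
Definition coord_mass (X Y : M -> R) := \sum_m \sum_m' X m * coord_weight m m' * Y m'.

Lemma coord_weight01 m m' : 0 <= coord_weight m m' <= 1.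
Proof. by rewrite /coord_weight; case: ifP; rewrite ?lexx ?ler01. Qed.

Lemma coord_mass_sym X Y : coord_mass X Y = coord_mass Y X.
Proof.
rewrite /coord_mass exchange_big /=; apply: eq_bigr => m _; apply: eq_bigr => m' _.
by rewrite /coord_weight Lpair_sym (andbC (sent m)); ring.
Qed.

Lemma coord_mass_ge0 X Y : (forall m, 0 <= X m) -> (forall m, 0 <= Y m) ->
  0 <= coord_mass X Y.
Proof.
move=> hX hY; apply: sumr_ge0 => m _; apply: sumr_ge0 => m' _.
by rewrite !mulr_ge0 // (andP (coord_weight01 m m')).1.
Qed.

Lemma coord_mass_le X Y : (forall m, 0 <= X m) -> (forall m, 0 <= Y m) ->
  coord_mass X Y <= (\sum_m X m) * (\sum_m Y m).
Proof.
move=> hX hY; rewrite /coord_mass mulr_suml; apply: ler_sum => m _.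
rewrite mulr_sumr; apply: ler_sum => m' _.
have /andP[w0 w1] := coord_weight01 m m'.
by rewrite -mulrA ler_wpM2l // ler_piMl.
Qed.

Lemma alpha_weighted_sum X : (forall m, ~~ sent m -> X m = 0) ->
  \sum_m X m * alpha m = coord_mass X mass_low + coord_mass X mass_high.
Proof.
move=> hX; rewrite /coord_mass -big_split /=; apply: eq_bigr => m _.
rewrite -big_split /= /alpha mulr_sumr; apply: eq_bigr => m' _.
have [Sm|nSm] := boolP (sent m); last by rewrite hX // !mul0r addr0.
rewrite -mulrDr mass_low_high /coord_weight Sm /=.
by case: (sent m' && Lpair m m'); rewrite ?mulr1 ?mulr0 ?mul0r.
Qed.

Hypothesis hE : is_equilibrium f s.

Lemma bounded_mfun_msg_value m : bounded_mfun (msg_value m).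
Proof. by rewrite /msg_value; bounded_mfun_auto. Qed.

Lemma msg_value_ge0 m u : D u -> 0 <= msg_value m u.
Proof.
move/in_types => /andP[u0 u1]; have := alpha_ge0 m; have := alpha_le1 m.
by move=> h1 h0; apply: addr_ge0; apply: mulr_ge0; lra.
Qed.

Lemma msg_value_le_payoff m u : sent m -> D u -> msg_value m u <= payoff_u f s s u.
Proof.
move=> Sm Du; rewrite -(deviation_payoff Sm Du).
exact: hE.2 _ Du _ (deviation_strategy m).
Qed.

Lemma exists_sent : exists m, sent m.
Proof.
apply: contrapT => none; have := sum_sent_mubar; rewrite big1 => [|m _].
  by move/eqP; rewrite eq_sym oner_eq0.
by case: ifP => // Sm; exfalso; apply: none; exists m.
Qed.

Section Extremal.
Variables mA mB : M.
Hypotheses (SmA : sent mA) (hA : forall m, sent m -> alpha m <= alpha mA).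
Hypotheses (SmB : sent mB) (hB : forall m, sent m -> alpha mB <= alpha m).
Local Notation A := (alpha mA).
Local Notation B := (alpha mB).

Definition envelope u := ind R (u <= half) * msg_value mA u + ind R (half < u) * msg_value mB u.

Lemma bounded_mfun_envelope : bounded_mfun envelope.
Proof. by rewrite /envelope; bounded_mfun_auto; exact: bounded_mfun_msg_value. Qed.

Lemma envelope_le_payoff u : D u -> envelope u <= payoff_u f s s u.
Proof.
move=> Du; rewrite /envelope /ind; have [h|h] := leP u half.
  by rewrite mul1r mul0r addr0; exact: msg_value_le_payoff.
by rewrite mul0r add0r mul1r; exact: msg_value_le_payoff.
Qed.

Lemma msg_value_le_envelope m u : sent m -> D u -> msg_value m u <= envelope u.
Proof.
move=> Sm /in_types /andP[u0 u1]; rewrite /envelope /ind /msg_value.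
have := hA Sm; have := hB Sm => h1 h2.
have [h|h] := leP u half; rewrite ?mul1r ?mul0r ?addr0 ?add0r.
  have : 0 <= (A - alpha m) * (1 - 2 * u) by apply: mulr_ge0; lra.
  lra.
have : 0 <= (alpha m - B) * (2 * u - 1) by apply: mulr_ge0; lra.
lra.
Qed.

Definition slack m u := smu s u m * (envelope u - msg_value m u).

Lemma bounded_mfun_slack m : bounded_mfun (slack m).
Proof.
apply: bounded_mfunM; first exact: bounded_mfun_mu.
exact: bounded_mfunB bounded_mfun_envelope (bounded_mfun_msg_value m).
Qed.

Lemma slack_ge0 m u : sent m -> D u -> 0 <= slack m u.
Proof.
move=> Sm Du; apply: mulr_ge0; first by have /andP[] := strategy_mu_bound m hs Du.
by rewrite subr_ge0; exact: msg_value_le_envelope.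
Qed.

Lemma envelope_ge0 u : D u -> 0 <= envelope u.
Proof.
by move=> Du; rewrite /envelope addr_ge0 // mulr_ge0 ?msg_value_ge0 ?(andP (ind01 _ _)).1.
Qed.

Lemma sum_slack_le : \sum_m (if sent m then expect (slack m) else 0)
  <= expect envelope - payoff f s s.
Proof.
have env_sum : \sum_m expect (fun u => smu s u m * envelope u) = expect envelope.
  rewrite -(expect_sum hf); last by move=> m; apply: bounded_mfunM;
    [exact: bounded_mfun_mu|exact: bounded_mfun_envelope].
  by apply: eq_expect => u Du; rewrite -mulr_suml strategy_mu_sum1 ?mul1r.
rewrite payoff_msg_values -env_sum -sumrB; apply: ler_sum => m _.
case: ifP => _; last first.
  rewrite subr0; apply: (expect_ge0 hf) => u Du.
  by rewrite mulr_ge0 ?envelope_ge0 // (andP (strategy_mu_bound m hs Du)).1.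
rewrite -(expectB hf); first last.
- exact: bounded_mfunM (bounded_mfun_mu m hs) (bounded_mfun_msg_value m).
- exact: bounded_mfunM (bounded_mfun_mu m hs) bounded_mfun_envelope.
by rewrite le_eqVlt (@eq_expect R f (slack m) _ (fun u _ => mulrBr _ _ _)) eqxx.
Qed.

Lemma sent_slack_ge0 m : 0 <= (if sent m then expect (slack m) else 0).
Proof. by case: ifP => // Sm; apply: (expect_ge0 hf) => u Du; exact: slack_ge0. Qed.

Lemma payoff_le_envelope : payoff f s s <= expect envelope.
Proof.
have := sum_slack_le; have : 0 <= \sum_m (if sent m then expect (slack m) else 0).
  by apply: sumr_ge0 => m _; exact: sent_slack_ge0.
lra.
Qed.

(* The equilibrium reaches the envelope payoff, so no sent message has slack. *)
Lemma slack_zero m : sent m -> expect (slack m) = 0.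
Proof.
have env_le : expect envelope <= payoff f s s.
  have -> : payoff f s s = expect (payoff_u f s s) by [].
  rewrite (@eq_expect R f _ _ (fun u _ => payoff_u_decomp hf s u hs)).
  apply: (ler_expect hf); [exact: bounded_mfun_envelope|bounded_mfun_auto|].
  by move=> u Du; rewrite -(payoff_u_decomp hf s u hs); exact: envelope_le_payoff.
move=> Sm; apply/le_anti/andP; split; last by have := sent_slack_ge0 m; rewrite Sm.
have := sum_slack_le; rewrite (bigD1 m) //= Sm.
have : 0 <= \sum_(i | i != m) (if sent i then expect (slack i) else 0).
  by apply: sumr_ge0 => i _; exact: sent_slack_ge0.
lra.
Qed.

Lemma mass_low_zero m : sent m -> alpha m < A -> mass_low m = 0.
Proof.
move=> Sm lt.
rewrite /mass_low (eq_expect_off_point hf (x0 := half)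
  (g2 := fun u => smu s u m * ind R (u < half))); first last.
- by move=> u _ /eqP ne; rewrite /ind lt_neqAle ne.
- exact: bounded_mfunM (bounded_mfun_mu m hs) (bounded_mfun_lt _).
- by bounded_mfun_auto.
apply: (expect_null hf (h := slack m)).
- exact: bounded_mfun_slack.
- exact: bounded_mfunM (bounded_mfun_mu m hs) (bounded_mfun_lt _).
- by move=> u Du; exact: slack_ge0.
- exact: slack_zero.
move=> u Du; rewrite /slack /ind; case: ltP => hu; last by rewrite mulr0.
have -> : envelope u - msg_value m u = (A - alpha m) * (1 - 2 * u).
  by rewrite /envelope /ind (ltW hu) ltNge (ltW hu) /= /msg_value; ring.
move/eqP; rewrite mulr1 !mulf_eq0 => /orP[/eqP //|/orP[] /eqP h]; lra.
Qed.

Lemma mass_high_zero m : sent m -> B < alpha m -> mass_high m = 0.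
Proof.
move=> Sm lt; apply: (expect_null hf (h := slack m)).
- exact: bounded_mfun_slack.
- by bounded_mfun_auto.
- by move=> u Du; exact: slack_ge0.
- exact: slack_zero.
move=> u Du; rewrite /slack /ind; case: ltP => hu; last by rewrite mulr0.
have -> : envelope u - msg_value m u = (alpha m - B) * (2 * u - 1).
  by rewrite /envelope /ind hu leNgt hu /= /msg_value; ring.
move/eqP; rewrite mulr1 !mulf_eq0 => /orP[/eqP //|/orP[] /eqP h]; lra.
Qed.

Lemma sum_mass_low_alpha : \sum_m mass_low m * alpha m = A * p_low f.
Proof.
rewrite -sum_mass_low mulr_sumr; apply: eq_bigr => m _.
have [Sm|/unsent_masses[-> _]] := boolP (sent m); last by rewrite mul0r mulr0.
have := hA Sm; rewrite le_eqVlt => /orP[/eqP ->|lt]; first by rewrite mulrC.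
by rewrite mass_low_zero // mul0r mulr0.
Qed.

Lemma sum_mass_high_alpha : \sum_m mass_high m * alpha m = B * p_high f.
Proof.
rewrite -sum_mass_high mulr_sumr; apply: eq_bigr => m _.
have [Sm|/unsent_masses[_ ->]] := boolP (sent m); last by rewrite mul0r mulr0.
have := hB Sm; rewrite le_eqVlt => /orP[/eqP <-|lt]; first by rewrite mulrC.
by rewrite mass_high_zero // mul0r mulr0.
Qed.

(* Counting the L-coordinations of the low types: those among themselves
   are at most p_low^2, those with high types are counted by B p_high. *)
Lemma budget : A * p_low f - p_low f * p_low f <= B * p_high f.
Proof.
rewrite -sum_mass_high_alpha -sum_mass_low_alpha.
rewrite (alpha_weighted_sum (fun m hm => (unsent_masses hm).2)).
rewrite (alpha_weighted_sum (fun m hm => (unsent_masses hm).1)).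
have := coord_mass_ge0 mass_high_ge0 mass_high_ge0.
have := coord_mass_le mass_low_ge0 mass_low_ge0; rewrite sum_mass_low.
by rewrite (coord_mass_sym mass_high mass_low); lra.
Qed.

Lemma expect_envelope : expect envelope =
  A * low_L f + (1 - A) * low_R f + B * high_L f + (1 - B) * high_R f.
Proof.
rewrite (@eq_expect R f _ (fun u => A * (ind R (u <= half) * (1 - u))
   + (1 - A) * (ind R (u <= half) * u) + B * (ind R (half < u) * (1 - u))
   + (1 - B) * (ind R (half < u) * u))); last by move=> u _; rewrite /envelope /msg_value; ring.
by rewrite !(expectD hf) ?(expectZ hf) //; bounded_mfun_auto.
Qed.

Lemma extremal_payoff_bound : payoff f s s <=
  Num.max (low_L f + p_low f * high_L f + p_high f * high_R f)
          (p_low f * low_L f + p_high f * low_R f + high_R f).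
Proof.
apply: (le_trans payoff_le_envelope); rewrite expect_envelope.
have x0 : 0 <= low_L f - low_R f by rewrite subr_ge0 low_R_le_L.
have y0 : 0 <= high_R f - high_L f by rewrite subr_ge0 high_L_le_R.
have := envelope_ineq x0 y0 (high_gain_le hf) (p_low_ge0 hf) (p_high_ge0 hf)
  (p_low_high hf) (alpha_ge0 mB) (alpha_le1 mA) budget.
have e : p_high f = 1 - p_low f by have := p_low_high hf; lra.
by rewrite !le_max e => /orP[] h; apply/orP; [left|right]; lra.
Qed.

End Extremal.
Lemma coordinated_payoff_bound : payoff f s s <=
  Num.max (low_L f + p_low f * high_L f + p_high f * high_R f)
          (p_low f * low_L f + p_high f * low_R f + high_R f).
Proof.
have [m0 Sm0] := exists_sent.
have [mA SmA hA] := @arg_maxP _ _ M m0 sent alpha Sm0.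
have [mB SmB hB] := @arg_minP _ _ M m0 sent alpha Sm0.
exact: extremal_payoff_bound SmA hA SmB hB.
Qed.

End CoordinatedEquilibrium.

Section Benchmarks.
Variables (R : realType) (M : finType) (f : R -> R).
Hypothesis hf : is_type_density f.
Local Notation expect := (expect f).
Local Notation half := (2^-1 : R).
Variables (mL mR : M).
Hypothesis hLR : mL != mR.

Lemma mass_binary (sg : strat R M) m m' w : is_strategy sg -> bounded_mfun w ->
  sxi sg m m' = 0 \/ sxi sg m m' = 1 ->
  massL f sg m m' w = sxi sg m m' * expect (fun u => smu sg u m * w u) /\
  massR f sg m m' w = (1 - sxi sg m m') * expect (fun u => smu sg u m * w u).
Proof.
move=> hs gw [e|e]; rewrite e ?subr0 ?subrr ?mul0r ?mul1r.
  exact (mass_xiR hf hs gw (xiR_of_zero e)).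
exact (mass_xiL f w hs (xiL_of_one e)).
Qed.

Lemma mu_star_ind u m : mu_star mL mR u m =
  ind R (u <= half) * ind R (m == mL) + ind R (half < u) * ind R (m == mR).
Proof.
by rewrite /mu_star /ind ltNge; case: (u <= half); rewrite ?mul1r ?mul0r ?addr0 ?add0r.
Qed.

Lemma bounded_mfun_mu_star m : bounded_mfun (fun u : R => mu_star mL mR u m).
Proof.
have -> : (fun u : R => mu_star mL mR u m) = (fun u => ind R (u <= half) * ind R (m == mL)
    + ind R (half < u) * ind R (m == mR)) by apply/funext => u; rewrite mu_star_ind.
by bounded_mfun_auto.
Qed.

Lemma mu_star_strategy (xi : M -> M -> R) : (forall m m', 0 <= xi m m' <= 1) ->
  is_strategy (Strat (mu_star mL mR) xi).
Proof.
move=> hxi; split.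
  by move=> m; exact: (bounded_mfun_mu_star m).1.
split => // u _; split.
  by move=> m; rewrite /= mu_star_ind addr_ge0 // mulr_ge0 // (andP (ind01 _ _)).1.
by rewrite /= /mu_star; case: (u <= half); exact: sum_ind_eq.
Qed.

Local Notation bench_expect m w := (expect (fun u => mu_star mL mR u m * w u)).

Lemma bench_expect_other m w : m != mL -> m != mR -> bench_expect m w = 0.
Proof.
move=> /negbTE h1 /negbTE h2; rewrite -(expect0 f); apply: eq_expect => u _.
by rewrite mu_star_ind /ind h1 h2; ring.
Qed.

Lemma bench_expect_L w : bench_expect mL w = expect (fun u => ind R (u <= half) * w u).
Proof.
apply: eq_expect => u _; rewrite mu_star_ind eqxx (negbTE hLR) /ind.
by case: (u <= half); case: (half < u); ring.
Qed.

Lemma bench_expect_R w : bench_expect mR w = expect (fun u => ind R (half < u) * w u).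
Proof.
apply: eq_expect => u _; rewrite mu_star_ind eqxx eq_sym (negbTE hLR) /ind.
by case: (u <= half); case: (half < u); ring.
Qed.

Lemma bench_mass_L : bench_expect mL (fun=> 1) = p_low f.
Proof. by rewrite bench_expect_L; apply: eq_expect => u _; rewrite mulr1. Qed.

Lemma bench_mass_R : bench_expect mR (fun=> 1) = p_high f.
Proof. by rewrite bench_expect_R; apply: eq_expect => u _; rewrite mulr1. Qed.

Lemma sum_two (F : M -> R) : (forall m, m != mL -> m != mR -> F m = 0) ->
  \sum_m F m = F mL + F mR.
Proof.
move=> hF; rewrite (bigD1 mL) //= (bigD1 mR) 1?eq_sym //=.
by rewrite big1 ?addr0 // => m /andP[h1 h2]; exact: hF.
Qed.

(* The payoff of a benchmark-type profile: only mL and mR are sent. *)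
Lemma benchmark_payoff (xi : M -> M -> R) :
  (forall m m', xi m m' = 0 \/ xi m m' = 1) ->
  let F m m' := xi m m' * xi m' m * bench_expect m (fun u => 1 - u) * bench_expect m' (fun=> 1)
    + (1 - xi m m') * (1 - xi m' m) * bench_expect m id * bench_expect m' (fun=> 1) in
  payoff f (Strat (mu_star mL mR) xi) (Strat (mu_star mL mR) xi)
    = F mL mL + F mL mR + F mR mL + F mR mR.
Proof.
move=> hxi F; have hs : is_strategy (Strat (mu_star mL mR) xi).
  by apply: mu_star_strategy => m m'; case: (hxi m m') => ->; rewrite ?lexx ?ler01.
rewrite (payoff_decomp hf hs) (eq_bigr (fun m => \sum_m' F m m')); last first.
  move=> m _; apply: eq_bigr => m' _; rewrite /F.
  have b1u : bounded_mfun (fun u : R => 1 - u) by bounded_mfun_auto.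
  have b1 := @bounded_mfun_cst R 1; have bid := @bounded_mfun_id R.
  rewrite (mass_binary hs b1u (hxi m m')).1 (mass_binary hs b1 (hxi m' m)).1.
  by rewrite (mass_binary hs bid (hxi m m')).2 (mass_binary hs b1 (hxi m' m)).2 /=; ring.
have F0 m m' : (m != mL) && (m != mR) || (m' != mL) && (m' != mR) -> F m m' = 0.
  by case/orP => /andP[h1 h2]; rewrite /F !(bench_expect_other _ h1 h2); ring.
rewrite sum_two; last by move=> m h1 h2; apply: big1 => m' _; rewrite F0 // h1 h2.
rewrite (sum_two (F := F mL)); last by move=> m' h1 h2; rewrite F0 // h1 h2 orbT.
rewrite (sum_two (F := F mR)); last by move=> m' h1 h2; rewrite F0 // h1 h2 orbT.
by rewrite addrA.
Qed.
Lemma payoff_sigma_L : payoff f (sigma_L R mL mR) (sigma_L R mL mR)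
  = low_L f + p_low f * high_L f + p_high f * high_R f.
Proof.
rewrite /sigma_L (benchmark_payoff (xi := xi_L R mR)); last first.
  by move=> m m'; rewrite /xi_L; case: ifP; [left|right].
rewrite /= /xi_L eqxx (negbTE hLR) /= !bench_mass_L !bench_mass_R.
rewrite !bench_expect_L !bench_expect_R -/(low_L f) -/(low_R f) -/(high_L f) -/(high_R f).
have -> : p_high f = 1 - p_low f by have := p_low_high hf; lra.
ring.
Qed.

Lemma payoff_sigma_R : payoff f (sigma_R R mL mR) (sigma_R R mL mR)
  = p_low f * low_L f + p_high f * low_R f + high_R f.
Proof.
rewrite /sigma_R (benchmark_payoff (xi := xi_R R mL)); last first.
  by move=> m m'; rewrite /xi_R; case: ifP; [right|left].
rewrite /= /xi_R eqxx eq_sym (negbTE hLR) /= !bench_mass_L !bench_mass_R.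
rewrite !bench_expect_L !bench_expect_R -/(low_L f) -/(low_R f) -/(high_L f) -/(high_R f).
have -> : p_high f = 1 - p_low f by have := p_low_high hf; lra.
ring.
Qed.

End Benchmarks.

Theorem mainTheorem6 (R : realType) (M : finType) (hM : (4 <= #|M|)%N)
  (f : R -> R) (hf : is_type_density f) (mL mR : M) (hLR : mL != mR)
  (s : strat R M) (hE : is_equilibrium f s) (hC : coordinated f s) :
  payoff f s s <= Num.max (payoff f (@sigma_L R M mL mR) (@sigma_L R M mL mR))
                      (payoff f (@sigma_R R M mL mR) (@sigma_R R M mL mR)).
Proof.
rewrite (payoff_sigma_L hf hLR) (payoff_sigma_R hf hLR).
exact (coordinated_payoff_bound hf hE.1 hC hE).
Qed.
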